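(* Let $G\le\operatorname{Aut}(T_\alpha)$ be a profinite branch group and $v$ a vertex of $T_\alpha$. Then $\mathrm{rist}_G(v)$ has finitely many orbits on $\partial T_\alpha^v$.
   Context: For $\alpha\in\mathbb{N}^{\mathbb{N}}$ with $\alpha(i)\ge2$ for all $i$, $T_\alpha$ is the spherically homogeneous rooted tree with root $r$ in which every vertex of level $n$ (distance $n$ from $r$) has $\alpha(n)$ children. For a vertex $v$, $T_\alpha^v$ is the subtree of vertices $w\ge v$ (lying below $v$ on a path from the root). The boundary $\partial T_\alpha$ is the set of infinite rays $(v_1,v_2,\dots)$ with $v_1=r$ and $v_{i+1}$ a child of $v_i$, with the topology generated by the sets of rays with a prescribed initial segment (a Cantor space); $\partial T_\alpha^v$ is the set of rays passing through $v$. For a closed $G\le\operatorname{Aut}(T_\alpha)$, $\mathrm{rist}_G(v)=\{g\in G: g(w)=w\text{ for all }w\notin T_\alpha^v\}$ and $\mathrm{rist}_G(n)$ is the subgroup generated by $\mathrm{rist}_G(v)$, $v$ of level $n$. $G$ is a profinite branch group if it is a closed subgroup of $\operatorname{Aut}(T_\alpha)$ (profinite topology) acting transitively on each level of $T_\alpha$ with $|G:\mathrm{rist}_G(n)|<\infty$ for every $n$. *)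

From mathcomp Require Import all_boot.
Set Implicit Arguments. Unset Strict Implicit. Unset Printing Implicit Defensive.

(* Vertices of T_alpha: the root is [::]; a vertex of level n is a sequence
   [:: x_0; ...; x_(n-1)] with x_i < alpha i (x_i = which child at level i). *)
Definition is_vertex (alpha : nat -> nat) (v : seq nat) : Prop :=
  forall i, i < size v -> nth 0 v i < alpha i.

Definition below (v w : seq nat) : Prop := take (size v) w = v.

Definition vmap := seq nat -> seq nat.

(* g agrees with h on all vertices of T_alpha (values off the tree are junk) *)
Definition agree (alpha : nat -> nat) (g h : vmap) : Prop :=
  forall v, is_vertex alpha v -> g v = h v.

Definition is_aut (alpha : nat -> nat) (g : vmap) : Prop :=
  (forall v, is_vertex alpha v -> is_vertex alpha (g v) /\ size (g v) = size v) /\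
  (forall v n, is_vertex alpha v -> g (take n v) = take n (g v)) /\
  (exists h : vmap, forall v, is_vertex alpha v ->
       is_vertex alpha (h v) /\ g (h v) = v /\ h (g v) = v).

Definition is_subgroup (alpha : nat -> nat) (G : vmap -> Prop) : Prop :=
  (forall g, G g -> is_aut alpha g) /\
  G id /\
  (forall g h, G g -> G h -> G (g \o h)) /\
  (forall g, G g -> exists h, G h /\ agree alpha (h \o g) id /\ agree alpha (g \o h) id).

(* Closed in the profinite (congruence) topology: an automorphism that agrees
   on every level with some element of G is (up to junk) in G. *)
Definition is_closed (alpha : nat -> nat) (G : vmap -> Prop) : Prop :=
  forall g, is_aut alpha g ->
    (forall n, exists h, G h /\
        forall v, is_vertex alpha v -> size v = n -> g v = h v) ->
    exists h, G h /\ agree alpha g h.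

Definition level_transitive (alpha : nat -> nat) (G : vmap -> Prop) : Prop :=
  forall u w, is_vertex alpha u -> is_vertex alpha w -> size u = size w ->
    exists g, G g /\ g u = w.

Definition rist (alpha : nat -> nat) (G : vmap -> Prop) (v : seq nat) (g : vmap) : Prop :=
  G g /\ forall w, is_vertex alpha w -> ~ below v w -> g w = w.

(* rist_G(n): subgroup generated by the rist_G(v), v of level n, i.e. finite
   products of such elements (each rist_G(v) is closed under inverses). *)
Definition rist_level (alpha : nat -> nat) (G : vmap -> Prop) (n : nat) (g : vmap) : Prop :=
  exists gs : seq vmap,
    (forall i, i < size gs -> exists v, is_vertex alpha v /\ size v = n /\
                                  rist alpha G v (nth id gs i)) /\
    agree alpha g (foldr (fun f acc => f \o acc) id gs).

(* |G : rist_G(n)| < oo : finitely many left cosets c * rist_G(n) cover G *)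
Definition finite_index_rist (alpha : nat -> nat) (G : vmap -> Prop) (n : nat) : Prop :=
  exists cs : seq vmap,
    (forall i, i < size cs -> G (nth id cs i)) /\
    forall g, G g -> exists i r, i < size cs /\ rist_level alpha G n r /\
                            agree alpha g (nth id cs i \o r).

Definition profinite_branch (alpha : nat -> nat) (G : vmap -> Prop) : Prop :=
  is_subgroup alpha G /\ is_closed alpha G /\ level_transitive alpha G /\
  forall n, finite_index_rist alpha G n.

(* Boundary: rays are sequences x with x i < alpha i; the vertex at level n
   on the ray is mkseq x n. *)
Definition is_ray (alpha : nat -> nat) (x : nat -> nat) : Prop := forall i, x i < alpha i.

Definition ray_through (v : seq nat) (x : nat -> nat) : Prop := mkseq x (size v) = v.

Definition act (g : vmap) (x : nat -> nat) : nat -> nat :=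
  fun i => nth 0 (g (mkseq x i.+1)) i.

From Stdlib Require Import ClassicalEpsilon.
From mathcomp Require Import all_boot zify.
Set Implicit Arguments. Unset Strict Implicit. Unset Printing Implicit Defensive.

(* Write n = |v| and let c_1 rist_G(n), ..., c_m rist_G(n) be the cosets of
   rist_G(n) in G.  Fix a ray x through v.  Since a closed subgroup of the
   compact group Aut(T_alpha) is compact and G is level transitive, every ray
   y through v is mapped onto x by some g = c_i r with r in rist_G(n).  The
   factors of r at level-n vertices other than v do not move the subtree
   below v, so r acts there like some s in rist_G(v); hence s y = c_i^-1 x,
   and the m rays c_i^-1 x that pass through v represent all rist_G(v)-orbits. *)

Definition agree_upto alpha L (g h : vmap) : Prop :=
  forall w, is_vertex alpha w -> size w <= L -> g w = h w.

Definition fixes_outside alpha v (g : vmap) : Prop :=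
  forall w, is_vertex alpha w -> ~ below v w -> g w = w.

Definition maps_ray (g : vmap) (x y : nat -> nat) : Prop :=
  forall L, g (mkseq x L) = mkseq y L.

Lemma take_mkseq (x : nat -> nat) L L' : L <= L' -> take L (mkseq x L') = mkseq x L.
Proof. by move=> hL; rewrite /mkseq -map_take take_iota (minn_idPl hL). Qed.

Lemma ray_through_below v x L : ray_through v x -> size v <= L -> below v (mkseq x L).
Proof. by move=> hx hL; rewrite /below take_mkseq. Qed.

Lemma act_maps_ray g x y : maps_ray g x y -> forall k, act g x k = y k.
Proof. by move=> hg k; rewrite /act hg nth_mkseq. Qed.

Section Tree.

Variable alpha : nat -> nat.

Lemma is_vertex_take w n : is_vertex alpha w -> is_vertex alpha (take n w).
Proof.
move=> hw i; rewrite size_take_min => hi.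
by rewrite nth_take; [apply: hw|]; lia.
Qed.

Lemma is_vertex_mkseq x L : is_ray alpha x -> is_vertex alpha (mkseq x L).
Proof. by move=> hx i; rewrite size_mkseq => hi; rewrite nth_mkseq. Qed.

Lemma vertex_ray v : (forall i, 0 < alpha i) -> is_vertex alpha v ->
  exists x, is_ray alpha x /\ ray_through v x.
Proof.
move=> alpha_gt0 hv; exists (nth 0 v); split; last exact: mkseq_nth.
by move=> i; case: (ltnP i (size v)) => hi; [apply: hv | rewrite nth_default].
Qed.

Section Automorphism.

Variable g : vmap.
Hypothesis g_aut : is_aut alpha g.

Lemma aut_vertex w : is_vertex alpha w -> is_vertex alpha (g w).
Proof. by case: g_aut => h _ hw; case: (h w hw). Qed.

Lemma aut_size w : is_vertex alpha w -> size (g w) = size w.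
Proof. by case: g_aut => h _ hw; case: (h w hw). Qed.

Lemma aut_take w n : is_vertex alpha w -> g (take n w) = take n (g w).
Proof. by case: g_aut => _ [h _] hw; apply: h. Qed.

Lemma aut_inj u w : is_vertex alpha u -> is_vertex alpha w -> g u = g w -> u = w.
Proof.
case: g_aut => _ [_ [h hh]] hu hw e.
by have [_ [_ <-]] := hh u hu; have [_ [_ <-]] := hh w hw; rewrite e.
Qed.

Lemma aut_maps_ray_act x : is_ray alpha x -> is_ray alpha (act g x) /\ maps_ray g x (act g x).
Proof.
move=> hx; have hgx L := aut_size (@is_vertex_mkseq x L hx).
split=> [k | L].
  by apply: (aut_vertex (@is_vertex_mkseq x k.+1 hx)); rewrite hgx size_mkseq.
apply: (@eq_from_nth _ 0); first by rewrite hgx !size_mkseq.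
move=> k; rewrite hgx size_mkseq => hk; rewrite nth_mkseq // /act.
by rewrite -(@take_mkseq x k.+1 L) // aut_take ?nth_take //; apply: is_vertex_mkseq.
Qed.

Lemma maps_ray_from x y n : is_ray alpha x ->
  (forall L, n <= L -> g (mkseq x L) = mkseq y L) -> maps_ray g x y.
Proof.
move=> hx hg L; have hL : L <= maxn L n by apply: leq_maxl.
rewrite -(take_mkseq x hL) aut_take; last exact: is_vertex_mkseq.
by rewrite hg ?leq_maxr // take_mkseq.
Qed.

Variable v : seq nat.
Hypothesis g_fixes : fixes_outside alpha v g.

Lemma fixes_outside_root : is_vertex alpha v -> g v = v.
Proof.
move=> hv; apply: NNPP => hne.
have hnb : ~ below v (g v) by rewrite /below -(aut_size hv) take_size.
by apply/hne/(aut_inj (aut_vertex hv) hv)/g_fixes => //; apply: aut_vertex.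
Qed.

Lemma fixes_outside_below w : is_vertex alpha v -> is_vertex alpha w ->
  below v w -> below v (g w).
Proof.
move=> hv hw hb; rewrite /below -aut_take // hb.
exact: fixes_outside_root.
Qed.

End Automorphism.

Lemma aut_of_agree_upto g :
  (forall L, exists h, is_aut alpha h /\ agree_upto alpha L g h) -> is_aut alpha g.
Proof.
move=> hg; split; [|split].
- move=> w hw; have [h [ha hag]] := hg (size w).
  by rewrite hag //; split; [exact: aut_vertex | exact: aut_size].
- move=> w n hw; have [h [ha hag]] := hg (size w).
  rewrite (hag (take n w)) ?(hag w) ?aut_take //; first exact: is_vertex_take.
  by rewrite size_take_min geq_minr.
pose Pinv w u := is_vertex alpha u /\ size u = size w /\ g u = w.
pose ginv w := epsilon (inhabits [::]) (Pinv w).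
have ginvP w : (exists u, Pinv w u) -> Pinv w (ginv w) := epsilon_spec _ _.
exists ginv => w hw; have [h [ha hag]] := hg (size w).
have hgw : is_vertex alpha (g w) /\ size (g w) = size w.
  by rewrite hag //; split; [exact: aut_vertex | exact: aut_size].
have [hu1 [hu2 hu3]] : Pinv w (ginv w).
  apply: ginvP; have [hinv hinvP] := ha.2.2; have [hi1 [hi2 _]] := hinvP w hw.
  have hsz : size (hinv w) = size w by rewrite -{2}hi2 (aut_size ha hi1).
  by exists (hinv w); rewrite /Pinv hag ?hsz.
have [hz1 [hz2 hz3]] : Pinv (g w) (ginv (g w)) by apply: ginvP; exists w; rewrite /Pinv hgw.2.
do 2 split=> //; apply: (aut_inj ha) => //.
by rewrite -!hag ?hz2 ?hgw.2.
Qed.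

End Tree.

Definition vertexb alpha (w : seq nat) : bool :=
  all (fun i => nth 0 w i < alpha i) (iota 0 (size w)).

Lemma vertexbP alpha w : reflect (is_vertex alpha w) (vertexb alpha w).
Proof.
apply: (iffP allP) => hw i hi; first by apply: hw; rewrite mem_iota.
by apply: hw; move: hi; rewrite mem_iota.
Qed.

Fixpoint tuples_over (T : Type) (k : nat) (W : seq T) : seq (seq T) :=
  if k is k'.+1 then [seq a :: s | a <- W, s <- tuples_over k' W] else [:: [::]].

Lemma mem_tuples_over (T : eqType) (W : seq T) s :
  all (mem W) s -> s \in tuples_over (size s) W.
Proof.
elim: s => [|a s IH] /=; first by rewrite inE.
by case/andP=> ha hs; apply/allpairsP; exists (a, s); split=> //; apply: IH.
Qed.

Lemma vertex_mem_tuples alpha w : is_vertex alpha w ->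
  w \in tuples_over (size w) (iota 0 (\max_(i < size w) alpha i)).
Proof.
move=> hw; apply/mem_tuples_over/(all_nthP 0) => i hi /=; rewrite mem_iota add0n.
apply: leq_trans (hw i hi) _.
exact: (leq_bigmax (F := fun j : 'I_(size w) => alpha j) (Ordinal hi)).
Qed.

Lemma finite_extensions alpha L (f : vmap) : exists cands : seq vmap,
  (forall i, i < size cands -> agree_upto alpha L (nth id cands i) f) /\
  forall h, is_aut alpha h -> agree_upto alpha L h f ->
    exists2 i, i < size cands & agree_upto alpha L.+1 h (nth id cands i).
Proof.
pose W := [seq w <- tuples_over L.+1 (iota 0 (\max_(i < L.+1) alpha i)) |
           vertexb alpha w && (size w == L.+1)].
have memW w : w \in W <-> is_vertex alpha w /\ size w = L.+1.
  rewrite mem_filter; split; first by case/andP=> /andP [/vertexbP ? /eqP ?].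
  by case=> hw hs; rewrite (introT (vertexbP _ _) hw) hs eqxx !andbT -hs vertex_mem_tuples.
pose ext (c : seq (seq nat)) : vmap :=
  fun w => if size w <= L then f w else nth [::] c (index w W).
pose C := tuples_over (size W) W.
exists (map ext C); split.
  by move=> i hi w _ hw; rewrite (nth_map [::]) -?(size_map ext) // /ext hw.
move=> h ha hag.
have hC : map h W \in C.
  rewrite /C -(size_map h); apply/mem_tuples_over/allP => _ /mapP [w /memW [hw hs] ->].
  by apply/memW; rewrite (aut_size ha hw) hs; split=> //; apply: aut_vertex.
exists (index (map h W) C); first by rewrite size_map index_mem.
move=> w hw hs; rewrite (nth_map [::]) ?index_mem // nth_index // /ext.
case: leqP => hsL; first exact: hag.
have hwW : w \in W by apply/memW; split=> //; apply/eqP; rewrite eqn_leq hs hsL.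
by rewrite (nth_map [::]) ?index_mem // nth_index.
Qed.

Lemma ex_common_bound (X : eqType) (C : seq X) (P : X -> nat -> Prop) :
  (forall c M M', M <= M' -> P c M -> P c M') ->
  (forall c, c \in C -> exists M, P c M) ->
  exists M, forall c, c \in C -> P c M.
Proof.
move=> hmon; elim: C => [|c C IH] hex; first by exists 0.
have [M hM] := IH (fun c' hc' => hex c' (mem_behead (s := c :: C) hc')).
have [Mc hc] := hex c (mem_head c C); exists (maxn M Mc) => c'; rewrite inE.
case/predU1P=> [-> | hc']; first by apply: hmon hc; apply: leq_maxr.
by apply: hmon (hM _ hc'); apply: leq_maxl.
Qed.

Section Compactness.

Variables (alpha : nat -> nat) (G : vmap -> Prop) (A : nat -> vmap -> Prop).
Hypothesis G_sub : is_subgroup alpha G.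
Hypothesis G_closed : is_closed alpha G.
Hypothesis A_nonempty : forall M, exists h, G h /\ A M h.
Hypothesis A_antitone : forall M M' h, G h -> M <= M' -> A M' h -> A M h.
Hypothesis A_local : forall M h h', agree_upto alpha M h h' -> A M h -> A M h'.

Let G_aut g : G g -> is_aut alpha g. Proof. by case: G_sub => h _; apply: h. Qed.

Definition extendable L (f : vmap) : Prop :=
  forall M, exists h, G h /\ A M h /\ agree_upto alpha L h f.

(* König's lemma: of the finitely many extensions of f to level L + 1, one
   must remain extendable. *)
Lemma extendable_succ L f : extendable L f ->
  exists f', extendable L.+1 f' /\ agree_upto alpha L f' f.
Proof.
move=> hf; have [cands [cands_f cands_all]] := finite_extensions alpha L f.
apply: NNPP => hno.
pose P i M := forall h, G h -> A M h -> ~ agree_upto alpha L.+1 h (nth id cands i).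
have [M hM] : exists M, forall i, i \in iota 0 (size cands) -> P i M.
  apply: ex_common_bound => [i M M' hMM' hP h hG hA | i].
    exact: hP hG (A_antitone hG hMM' hA).
  rewrite mem_iota add0n => hi; apply: NNPP => hnoM.
  apply: hno; exists (nth id cands i); split; last exact: cands_f.
  move=> M; apply: NNPP => hM; apply: hnoM; exists M => h hG hA hag.
  by apply: hM; exists h.
have [h [hG [hA hag]]] := hf M.
have [i hi hagi] := cands_all h (G_aut hG) hag.
have hiC : i \in iota 0 (size cands) by rewrite mem_iota.
exact: hM i hiC h hG hA hagi.
Qed.

Lemma extendable0 : extendable 0 id.
Proof.
move=> M; have [h [hG hA]] := A_nonempty M; exists h; do 2 split=> //.
move=> w hw; rewrite leqn0 => /nilP w0; subst w.
by apply/nilP; rewrite /nilp (aut_size (G_aut hG) hw).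
Qed.

Fixpoint chain L : vmap :=
  if L is L'.+1 then
    epsilon (inhabits id) (fun f => extendable L f /\ agree_upto alpha L' f (chain L'))
  else id.

Lemma chain_succ L :
  extendable L (chain L) /\ agree_upto alpha L (chain L.+1) (chain L).
Proof.
have step L' : extendable L' (chain L') ->
    extendable L'.+1 (chain L'.+1) /\ agree_upto alpha L' (chain L'.+1) (chain L').
  move=> hL'; exact: (epsilon_spec (inhabits id)
    (fun f => extendable L'.+1 f /\ agree_upto alpha L' f (chain L')) (extendable_succ hL')).
suff hL : extendable L (chain L) by split; last exact: (step L hL).2.
by elim: L => [|L IH]; [exact: extendable0 | exact: (step L IH).1].
Qed.

Lemma chain_coherent L L' : L <= L' -> agree_upto alpha L (chain L') (chain L).
Proof.
elim: L' => [|L' IH]; first by rewrite leqn0 => /eqP ->.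
rewrite leq_eqVlt ltnS => /predU1P [-> // | hL] w hw hs.
by rewrite (chain_succ L').2 ?IH //; apply: leq_trans hs hL.
Qed.

Theorem closed_subgroup_compact : exists g, G g /\ forall M, A M g.
Proof.
pose lim w := chain (size w) w.
have lim_near M : exists h, G h /\ A M h /\ agree_upto alpha M lim h.
  have [h [hG [hA hag]]] := (chain_succ M).1 M.
  exists h; split=> //; split=> // w hw hs.
  by rewrite hag // /lim (chain_coherent hs).
have lim_aut : is_aut alpha lim.
  apply: aut_of_agree_upto => L; have [h [hG [_ hag]]] := lim_near L.
  by exists h; split; [apply: G_aut | ].
have [g [hG hag]] : exists g, G g /\ agree alpha lim g.
  apply: (G_closed lim_aut) => n; have [h [hG [_ hag]]] := lim_near n.
  by exists h; split=> // w hw hs; apply: hag; rewrite ?hs.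
exists g; split=> // M; have [h [_ [hA hh]]] := lim_near M.
by apply: A_local hA => w hw hs; rewrite -hag // hh.
Qed.

End Compactness.

Lemma level_transitive_maps_ray alpha G x y :
  is_subgroup alpha G -> is_closed alpha G -> level_transitive alpha G ->
  is_ray alpha x -> is_ray alpha y -> exists g, G g /\ maps_ray g x y.
Proof.
move=> hsub hcl htr hx hy; have [G_aut _] := hsub.
apply: (closed_subgroup_compact (A := fun M h => h (mkseq x M) = mkseq y M) hsub hcl).
- by move=> M; apply: htr; rewrite ?size_mkseq //; apply: is_vertex_mkseq.
- move=> M M' h hG hMM' /= hA.
  rewrite -(take_mkseq x hMM') (aut_take (G_aut _ hG)); last exact: is_vertex_mkseq.
  by rewrite hA take_mkseq.
- move=> M h h' hag /= <-; apply/esym/hag; rewrite ?size_mkseq //.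
  exact: is_vertex_mkseq.
Qed.

Lemma rist_level_below alpha G v r :
  is_subgroup alpha G -> is_vertex alpha v -> rist_level alpha G (size v) r ->
  exists s, rist alpha G v s /\ forall w, is_vertex alpha w -> below v w -> r w = s w.
Proof.
move=> hsub hv [gs [hgs hag]]; have [G_aut [G1 [GM _]]] := hsub.
suff [s [hs hsgs]] : exists s, rist alpha G v s /\ forall w, is_vertex alpha w ->
    below v w -> foldr (fun f acc => f \o acc) id gs w = s w.
  by exists s; split=> // w hw hb; rewrite hag ?hsgs.
clear hag; elim: gs hgs => [|f gs IH] hgs; first by exists id.
have [s [[hGs hfs] hs]] := IH (fun i hi => hgs i.+1 hi).
have [u [_ [hsu [/= hGf /= hff]]]] := hgs 0 (ltn0Sn _).
case: (eqVneq u v) => [uv | huv].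
  subst u; exists (f \o s); split; last by move=> w hw hb /=; rewrite hs.
  by split; [apply: GM | move=> w hw hnb /=; rewrite hfs // hff].
exists s; split=> // w hw hb /=.
have hbs : below v (s w) by apply: (fixes_outside_below (G_aut _ hGs) hfs).
rewrite hs // hff //; first exact: (aut_vertex (G_aut _ hGs)).
by rewrite /below hsu hbs => e; rewrite e eqxx in huv.
Qed.

Lemma rist_inv_maps_ray alpha G v s x y : is_subgroup alpha G -> rist alpha G v s ->
  is_ray alpha x -> maps_ray s x y -> exists t, rist alpha G v t /\ maps_ray t y x.
Proof.
move=> [_ [_ [_ Ginv]]] [hGs hfs] hx hs; have [t [hGt [hts _]]] := Ginv s hGs.
exists t; split; first split=> // w hw hnb.
  by rewrite -{1}(hfs w hw hnb); apply: hts.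
by move=> L; rewrite -hs; apply: hts; apply: is_vertex_mkseq.
Qed.

(* If c^-1 x passes through v it is the ray z below; otherwise the last
   property holds vacuously and any z through v will do. *)
Lemma coset_ray alpha G v c x :
  is_subgroup alpha G -> G c -> is_ray alpha x -> ray_through v x ->
  exists z, is_ray alpha z /\ ray_through v z /\
    forall L w, is_vertex alpha w -> size v <= L -> below v w ->
      c w = mkseq x L -> w = mkseq z L.
Proof.
move=> [G_aut [_ [_ Ginv]]] hc hx hxv; have [d [hd [hdc _]]] := Ginv c hc.
have [hz hdz] := aut_maps_ray_act (G_aut d hd) hx.
have back L w : is_vertex alpha w -> c w = mkseq x L -> w = mkseq (act d x) L.
  by move=> hw e; rewrite -hdz -e; apply/esym/hdc.
case: (eqVneq (mkseq (act d x) (size v)) v) => hzv.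
  by exists (act d x); split=> //; split=> // L w hw _ _; apply: back.
exists x; split=> //; split=> // L w hw hL hb e.
by rewrite -(take_mkseq _ hL) -(back L w hw e) hb eqxx in hzv.
Qed.

Lemma seq_choice (X : Type) (x0 : X) m (P : nat -> X -> Prop) :
  (forall i, i < m -> exists x, P i x) ->
  exists s, size s = m /\ forall i, i < m -> P i (nth x0 s i).
Proof.
elim: m => [|m IH] h; first by exists [::].
have [s [hs hP]] := IH (fun i hi => h i (ltnW hi)).
have [x hx] := h m (ltnSn m).
exists (rcons s x); split=> [|i hi]; first by rewrite size_rcons hs.
rewrite nth_rcons hs; case: ltnP => hl; first exact: hP.
have -> : i = m by apply/eqP; rewrite eqn_leq hl andbT -ltnS.
by rewrite eqxx.
Qed.

Theorem lemmaA2 (alpha : nat -> nat) (halpha : forall i, 2 <= alpha i)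
  (G : vmap -> Prop) (hG : profinite_branch alpha G)
  (v : seq nat) (hv : is_vertex alpha v) :
  exists reps : seq (nat -> nat),
    (forall i, i < size reps ->
       is_ray alpha (nth (fun _ => 0) reps i) /\ ray_through v (nth (fun _ => 0) reps i)) /\
    (forall y, is_ray alpha y -> ray_through v y ->
       exists i g, i < size reps /\ rist alpha G v g /\
                   forall k, act g (nth (fun _ => 0) reps i) k = y k).
Proof.
move: hG => [hsub [hcl [htr hfi]]]; have [G_aut _] := hsub.
have [x [hx hxv]] := vertex_ray (fun i => leq_trans (isT : 0 < 2) (halpha i)) hv.
have [cs [hcsG hcs]] := hfi (size v).
have [reps [hsz hreps]] := seq_choice (fun _ => 0)
  (fun i hi => coset_ray hsub (hcsG i hi) hx hxv).
exists reps; split=> [i | y hy hyv]; first by rewrite hsz => /hreps [? [? _]].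
have [g [hGg hgy]] := level_transitive_maps_ray hsub hcl htr hy hx.
have [i [r [hi [hr hgr]]]] := hcs g hGg.
have [s [hs hrs]] := rist_level_below hsub hv hr.
have [_ [_ hzP]] := hreps i hi.
have hsy : maps_ray s y (nth (fun _ => 0) reps i).
  apply: (maps_ray_from (G_aut _ hs.1) (n := size v) hy) => L hL.
  have hyL := @is_vertex_mkseq alpha y L hy; have hb := ray_through_below hyv hL.
  apply: hzP => //; first exact: (aut_vertex (G_aut _ hs.1)).
    exact: (fixes_outside_below (G_aut _ hs.1) hs.2).
  by rewrite -hrs // -hgy hgr.
have [t [ht hty]] := rist_inv_maps_ray hsub hs hy hsy.
by exists i, t; rewrite hsz; split=> //; split=> //; apply: act_maps_ray.
Qed.
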